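(* Let $n,m\ge 1$ and let $T$ be a geometric tree covering $V(n,m)=\{1,\dots,n\}\times\{1,\dots,m\}$. Then: (i) $T$ has at least $2\min(n,m)-2$ edges; (ii) if $n,m\le 2$, $T$ has at least $2\min(n,m)-1$ edges; (iii) if $n\ne m$, $T$ has at least $2\min(n,m)-1$ edges; (iv) if $n=m\ge 3$ and $T$ is noncrossing, $T$ has at least $2n-1$ edges.
   Context: A geometric tree is a finite abstract tree with at least one edge whose vertices are distinct points of the plane (arbitrary, not necessarily grid points) and whose edges are drawn as closed straight-line segments between their endpoints. It covers $P$ if every point of $P$ lies on the union of its edges. It is noncrossing if any two edges intersect only if they share an endpoint, and then only in that endpoint. *)

From Stdlib Require Import Reals List Relations.
Import ListNotations.
Open Scope R_scope.

Definition point := (R * R)%type.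
Definition edge := (point * point)%type.

Definition on_segment (p : point) (e : edge) : Prop :=
  let (a, b) := e in
  exists t : R, 0 <= t <= 1 /\
    fst p = fst a + t * (fst b - fst a) /\
    snd p = snd a + t * (snd b - snd a).

Definition swap_edge (e : edge) : edge := (snd e, fst e).

Definition adj (E : list edge) (u v : point) : Prop :=
  In (u, v) E \/ In (v, u) E.

Fixpoint consec_adj (E : list edge) (c : list point) : Prop :=
  match c with
  | x :: ((y :: _) as r) => adj E x y /\ consec_adj E r
  | _ => True
  end.

Definition is_cycle (E : list edge) (c : list point) : Prop :=
  (3 <= length c)%nat /\ NoDup c /\ consec_adj E c /\
  exists x y, hd_error c = Some x /\ last c x = y /\ adj E y x.

(* Edges are drawn as closed segments. *)
Definition geometric_tree (V : list point) (E : list edge) : Prop :=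
  NoDup V /\
  E <> [] /\
  (forall e, In e E -> In (fst e) V /\ In (snd e) V /\ fst e <> snd e) /\
  NoDup E /\
  (forall e, In e E -> ~ In (swap_edge e) E) /\
  (forall u v, In u V -> In v V -> clos_refl_trans point (adj E) u v) /\
  (forall c, ~ is_cycle E c).

Definition covers_grid (E : list edge) (n m : nat) : Prop :=
  forall i j : nat, (1 <= i <= n)%nat -> (1 <= j <= m)%nat ->
    exists e, In e E /\ on_segment (INR i, INR j) e.

Definition is_endpoint (x : point) (e : edge) : Prop :=
  x = fst e \/ x = snd e.

Definition noncrossing (E : list edge) : Prop :=
  forall e1 e2 x, In e1 E -> In e2 E -> e1 <> e2 ->
    on_segment x e1 -> on_segment x e2 ->
    is_endpoint x e1 /\ is_endpoint x e2.

(* Call a row (column) of the grid spanned if some edge contains two of its points; that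
   edge is then horizontal (vertical) on the line of the row (column).  Other rows and
   columns are free.
   - If every column is spanned, the tree has an edge inside each of the n lines x = i,
     and connecting these lines costs n-1 further edges: 2n-1 edges.  Likewise for rows.
   - Otherwise we double count tokens: two for each spanned row and column, plus tokens
     at chosen free grid points, arranged so that every edge meets at most two tokens.
     One free column (or row) gives n+m-1 edges.  With at least two free columns and rows
     the points on the frame of the free subgrid give n+m-2 edges; in the equality case
     the edges match the frame points in pairs by diagonal chords of its rectangle.
   - Such a boundary matching cannot be noncrossing (infinite descent on the number of
     matched points to the left of a chord), and for the 2x2 grid it cannot come from a
     tree with two edges (the two diagonals of the unit square share no endpoint).
   Comparing n+m-2, n+m-1 and 2min(n,m)-1 then gives the four claims. *)

From Stdlib Require Import Reals List Relations Arith.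
From Stdlib Require Import Lra Lia Psatz Classical ClassicalEpsilon FinFun.
Import ListNotations.

Definition decide (P : Prop) : bool :=
  if excluded_middle_informative P then true else false.

Lemma decide_true (P : Prop) : decide P = true <-> P.
Proof. unfold decide; destruct (excluded_middle_informative P); split; auto; discriminate. Qed.

Lemma decide_false (P : Prop) : decide P = false <-> ~ P.
Proof.
  unfold decide; destruct (excluded_middle_informative P); split; auto; try tauto; discriminate.
Qed.

Lemma length_filter_split {T} (f : T -> bool) (L : list T) :
  length L = (length (filter f L) + length (filter (fun x => negb (f x)) L))%nat.
Proof. induction L; simpl; auto. destruct (f a); simpl; lia. Qed.

Fixpoint sum_cap {X} (cap : X -> nat) (l : list X) : nat :=
  match l with [] => 0 | a :: l => cap a + sum_cap cap l end.

Definition covered_by {T X} (L : list T) (E : list X) (R : T -> X -> Prop) : Prop :=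
  forall x, In x L -> exists e, In e E /\ R x e.

Definition at_most_incident {T X} (L : list T) (R : T -> X -> Prop) (e : X) (k : nat) : Prop :=
  forall S, NoDup S -> (forall x, In x S -> In x L /\ R x e) -> (length S <= k)%nat.

Lemma incidence_count {T X} (L : list T) (E : list X) (R : T -> X -> Prop) (cap : X -> nat) :
  NoDup L -> covered_by L E R ->
  (forall e, In e E -> at_most_incident L R e (cap e)) ->
  (length L <= sum_cap cap E)%nat.
Proof.
  revert L. induction E as [|e E IH]; intros L ND Hc Hf.
  - destruct L as [|x L]; simpl; [lia|].
    destruct (Hc x (or_introl eq_refl)) as [e [[] _]].
  - simpl. rewrite (length_filter_split (fun x => decide (R x e)) L).
    assert (H1 : (length (filter (fun x => decide (R x e)) L) <= cap e)%nat).
    { apply (Hf e (or_introl eq_refl)); [apply NoDup_filter; auto |].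
      intros x Hx. apply filter_In in Hx. destruct Hx as [Hx Hr].
      apply (proj1 (decide_true _)) in Hr. tauto. }
    assert (H2 : (length (filter (fun x => negb (decide (R x e))) L) <= sum_cap cap E)%nat).
    { apply IH.
      - apply NoDup_filter; auto.
      - intros x Hx. apply filter_In in Hx. destruct Hx as [Hx Hr].
        destruct (Hc x Hx) as [e' [[<-|He'] Hr']].
        + apply Bool.negb_true_iff, (proj1 (decide_false _)) in Hr. contradiction.
        + eauto.
      - intros e' He' S ND' HS. apply (Hf e' (or_intror He') S ND').
        intros x Hx. destruct (HS x Hx) as [A B]. apply filter_In in A. tauto. }
    lia.
Qed.

Lemma incidence_count_two {T X} (L : list T) (E : list X) (R : T -> X -> Prop) :
  NoDup L -> covered_by L E R -> (forall e, In e E -> at_most_incident L R e 2) ->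
  (length L <= 2 * length E)%nat.
Proof.
  intros ND Hc Hf. replace (2 * length E)%nat with (sum_cap (fun _ => 2%nat) E).
  - apply (incidence_count L E R); auto.
  - clear Hc Hf. induction E; simpl; lia.
Qed.

Lemma sum_cap_one_less {X} (E : list X) e0 : NoDup E -> In e0 E ->
  (sum_cap (fun e => if decide (e = e0) then 1%nat else 2%nat) E + 1 = 2 * length E)%nat.
Proof.
  induction E as [|e E IH]; intros ND Hin; [destruct Hin|].
  inversion ND as [|? ? Nin ND']; subst. simpl. destruct Hin as [ -> | Hin ].
  - assert (Hrest : sum_cap (fun e => if decide (e = e0) then 1%nat else 2%nat) E
                    = (2 * length E)%nat).
    { clear IH ND ND'. induction E as [|a E IHE]; simpl; auto.
      destruct (decide (a = e0)) eqn:D.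
      - apply (proj1 (decide_true _)) in D. subst. exfalso. apply Nin. left; auto.
      - rewrite IHE; [lia|]. intro; apply Nin; right; auto. }
    rewrite Hrest. destruct (decide (e0 = e0)) eqn:D; [lia|].
    apply (proj1 (decide_false _)) in D. tauto.
  - specialize (IH ND' Hin). destruct (decide (e = e0)) eqn:D.
    + apply (proj1 (decide_true _)) in D. subst. contradiction.
    + lia.
Qed.

Lemma incidence_count_two_strict {T X} (L : list T) (E : list X) (R : T -> X -> Prop) e0 :
  NoDup L -> NoDup E -> In e0 E -> covered_by L E R ->
  (forall e, In e E -> at_most_incident L R e 2) -> at_most_incident L R e0 1 ->
  (length L < 2 * length E)%nat.
Proof.
  intros NDL NDE Hin Hc Hf H0.
  pose proof (sum_cap_one_less E e0 NDE Hin).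
  assert (length L <= sum_cap (fun e => if decide (e = e0) then 1%nat else 2%nat) E)%nat.
  { apply (incidence_count L E R); auto. intros e He.
    destruct (decide (e = e0)) eqn:D; [apply (proj1 (decide_true _)) in D; subst; auto | auto]. }
  lia.
Qed.

Lemma incidence_count_tight {T X} (L : list T) (E : list X) (R : T -> X -> Prop) :
  NoDup L -> NoDup E -> covered_by L E R ->
  (forall e, In e E -> at_most_incident L R e 2) -> (2 * length E <= length L)%nat ->
  (forall e, In e E -> exists x y, In x L /\ In y L /\ x <> y /\ R x e /\ R y e) /\
  (forall x e1 e2, In x L -> In e1 E -> In e2 E -> R x e1 -> R x e2 -> e1 = e2).
Proof.
  intros NDL NDE Hc Hf Hle. split.
  - intros e0 He0. apply NNPP. intro Hno.
    assert (length L < 2 * length E)%nat; [|lia].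
    apply (incidence_count_two_strict L E R e0); auto.
    intros S NDS HS. destruct S as [|x [|y S]]; simpl; try lia.
    exfalso. apply Hno. exists x, y.
    inversion NDS as [|? ? Nx _]; subst.
    destruct (HS x (or_introl eq_refl)), (HS y (or_intror (or_introl eq_refl))).
    repeat split; auto. intro; subst. apply Nx; left; auto.
  - intros x1 e1 e2 Hx He1 He2 R1 R2. apply NNPP. intro Ne.
    (* forgetting the incidence of x1 with e2 still covers L, and e2 drops to capacity 1 *)
    set (R' := fun x e => R x e /\ ~ (x = x1 /\ e = e2)).
    assert (length L < 2 * length E)%nat; [|lia].
    apply (incidence_count_two_strict L E R' e2); auto.
    + intros x Hx'. destruct (classic (x = x1)) as [->|Nx].
      * exists e1. split; auto. split; auto. intros [_ ?]. auto.
      * destruct (Hc x Hx') as [e [He Hr]]. exists e. split; auto. split; auto. tauto.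
    + intros e He S NDS HS. apply (Hf e He S NDS).
      intros x Hy. destruct (HS x Hy) as [A [B _]]. auto.
    + intros S NDS HS.
      assert (~ In x1 S) by (intro I; destruct (HS x1 I) as [_ [_ C]]; tauto).
      assert (length (x1 :: S) <= 2)%nat; [|simpl in *; lia].
      apply (Hf e2 He2); [constructor; auto|].
      intros x [<-|Hx']; [split; auto|]. destruct (HS x Hx') as [A [B _]]; auto.
Qed.
Open Scope R_scope.

Lemma point_eq (p q : point) : fst p = fst q -> snd p = snd q -> p = q.
Proof. destruct p, q; simpl; intros; subst; auto. Qed.

Lemma ratio_in_unit (a b : R) : 0 < a -> 0 < b -> 0 < a / (a + b) < 1.
Proof.
  intros Ha Hb. split.
  - apply Rdiv_lt_0_compat; lra.
  - apply Rmult_lt_reg_r with (a + b); [lra|].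
    unfold Rdiv. rewrite Rmult_assoc, Rinv_l by lra. lra.
Qed.

Lemma on_segment_param p e : on_segment p e ->
  exists t, 0 <= t <= 1 /\ fst p = fst (fst e) + t * (fst (snd e) - fst (fst e)) /\
    snd p = snd (fst e) + t * (snd (snd e) - snd (fst e)).
Proof. destruct e as [a b]. simpl. auto. Qed.

Lemma param_on_segment p e t : 0 <= t <= 1 ->
  fst p = fst (fst e) + t * (fst (snd e) - fst (fst e)) ->
  snd p = snd (fst e) + t * (snd (snd e) - snd (fst e)) -> on_segment p e.
Proof. destruct e as [a b]. simpl. intros. exists t. auto. Qed.

Lemma segment_collinear p q z e : on_segment p e -> on_segment q e -> on_segment z e ->
  p <> q -> exists lam, fst z = fst p + lam * (fst q - fst p) /\
                         snd z = snd p + lam * (snd q - snd p).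
Proof.
  intros Hp Hq Hz Npq.
  destruct (on_segment_param _ _ Hp) as [tp [Tp [Xp Yp]]].
  destruct (on_segment_param _ _ Hq) as [tq [Tq [Xq Yq]]].
  destruct (on_segment_param _ _ Hz) as [tz [Tz [Xz Yz]]].
  assert (tp <> tq) by (intro; subst; apply Npq; apply point_eq; lra).
  exists ((tz - tp) / (tq - tp)).
  rewrite Xz, Xp, Xq, Yz, Yp, Yq. split; field; lra.
Qed.

Lemma on_segment_interpolate p q X e lam : on_segment p e -> on_segment q e ->
  0 <= lam <= 1 ->
  fst X = fst p + lam * (fst q - fst p) -> snd X = snd p + lam * (snd q - snd p) ->
  on_segment X e.
Proof.
  intros Hp Hq Hl EX EY.
  destruct (on_segment_param _ _ Hp) as [tp [Tp [Xp Yp]]].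
  destruct (on_segment_param _ _ Hq) as [tq [Tq [Xq Yq]]].
  apply param_on_segment with (tp + lam * (tq - tp)).
  - split; nra.
  - rewrite EX, Xp, Xq. destruct e as [[ax ay] [bx by_]]; simpl. ring.
  - rewrite EY, Yp, Yq. destruct e as [[ax ay] [bx by_]]; simpl. ring.
Qed.

Lemma segment_interior_not_endpoint p q X e lam : on_segment p e -> on_segment q e ->
  fst e <> snd e -> p <> q -> 0 < lam < 1 ->
  fst X = fst p + lam * (fst q - fst p) -> snd X = snd p + lam * (snd q - snd p) ->
  ~ is_endpoint X e.
Proof.
  intros Hp Hq Nab Npq Hl EX EY Hend.
  destruct (on_segment_param _ _ Hp) as [tp [Tp [Xp Yp]]].
  destruct (on_segment_param _ _ Hq) as [tq [Tq [Xq Yq]]].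
  assert (tp <> tq) by (intro; subst; apply Npq; apply point_eq; lra).
  destruct e as [[ax ay] [bx by_]]; simpl in *.
  assert (Hab : ax <> bx \/ ay <> by_).
  { destruct (Req_dec ax bx); destruct (Req_dec ay by_); subst; auto. }
  set (tX := tp + lam * (tq - tp)) in *.
  assert (0 < tX < 1) by (unfold tX; destruct (Rlt_or_le tp tq); split; nra).
  assert (EX' : fst X = ax + tX * (bx - ax)) by (rewrite EX, Xp, Xq; unfold tX; ring).
  assert (EY' : snd X = ay + tX * (by_ - ay)) by (rewrite EY, Yp, Yq; unfold tX; ring).
  destruct Hend as [He|He]; rewrite He in EX', EY'; simpl in EX', EY';
  destruct Hab as [Hab|Hab]; apply Hab; nra.
Qed.

Lemma segment_horizontal p q e : on_segment p e -> on_segment q e -> p <> q ->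
  snd p = snd q -> snd (fst e) = snd (snd e).
Proof.
  intros Hp Hq Npq Hy.
  destruct (on_segment_param _ _ Hp) as [tp [Tp [Xp Yp]]].
  destruct (on_segment_param _ _ Hq) as [tq [Tq [Xq Yq]]].
  assert (tp <> tq) by (intro; subst; apply Npq; apply point_eq; lra).
  assert (Hz : (tp - tq) * (snd (snd e) - snd (fst e)) = 0) by nra.
  apply Rmult_integral in Hz. destruct Hz; lra.
Qed.

Lemma segment_vertical p q e : on_segment p e -> on_segment q e -> p <> q ->
  fst p = fst q -> fst (fst e) = fst (snd e).
Proof.
  intros Hp Hq Npq Hx.
  destruct (on_segment_param _ _ Hp) as [tp [Tp [Xp Yp]]].
  destruct (on_segment_param _ _ Hq) as [tq [Tq [Xq Yq]]].
  assert (tp <> tq) by (intro; subst; apply Npq; apply point_eq; lra).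
  assert (Hz : (tp - tq) * (fst (snd e) - fst (fst e)) = 0) by nra.
  apply Rmult_integral in Hz. destruct Hz; lra.
Qed.

Lemma on_horizontal_segment z e : on_segment z e -> snd (fst e) = snd (snd e) ->
  snd z = snd (fst e).
Proof.
  intros Hz H. destruct (on_segment_param _ _ Hz) as [t [T [X Y]]]. rewrite Y, H. ring.
Qed.

Lemma on_vertical_segment z e : on_segment z e -> fst (fst e) = fst (snd e) ->
  fst z = fst (fst e).
Proof.
  intros Hz H. destruct (on_segment_param _ _ Hz) as [t [T [X Y]]]. rewrite X, H. ring.
Qed.

(* The cross product [cross p q z] is positive, zero or negative according as [z] lies to
   the left of, on, or to the right of the line through [p] and [q]. *)
Definition cross (p q z : point) : R :=
  (fst q - fst p) * (snd z - snd p) - (snd q - snd p) * (fst z - fst p).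

Lemma cross_affine p q s t nu :
  cross p q (fst s + nu * (fst t - fst s), snd s + nu * (snd t - snd s)) =
  cross p q s + nu * (cross p q t - cross p q s).
Proof. unfold cross; simpl. ring. Qed.

Lemma cross_first s t : cross s t s = 0.
Proof. unfold cross; ring. Qed.

Lemma cross_second s t : cross s t t = 0.
Proof. unfold cross; ring. Qed.

Lemma cross_swap s t z : cross t s z = - cross s t z.
Proof. unfold cross; ring. Qed.

Lemma cross_zero_on_line p q X : p <> q -> cross p q X = 0 ->
  exists lam, fst X = fst p + lam * (fst q - fst p) /\ snd X = snd p + lam * (snd q - snd p).
Proof.
  unfold cross. intros Npq H.
  destruct (Req_dec (fst q) (fst p)) as [Ex|Ex].
  - assert (snd q <> snd p) by (intro; apply Npq; apply point_eq; lra).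
    exists ((snd X - snd p) / (snd q - snd p)). split.
    + assert (Hz : (snd q - snd p) * (fst X - fst p) = 0) by nra.
      apply Rmult_integral in Hz. destruct Hz; [lra|]. rewrite Ex. lra.
    + field. lra.
  - exists ((fst X - fst p) / (fst q - fst p)). split.
    + field. lra.
    + apply Rmult_eq_reg_l with (fst q - fst p); [|lra].
      field_simplify; [|lra]. nra.
Qed.

Lemma endpoint_same_ray w e p q : is_endpoint w e -> on_segment p e -> on_segment q e ->
  cross w p q = 0 /\
  0 <= (fst p - fst w) * (fst q - fst w) + (snd p - snd w) * (snd q - snd w).
Proof.
  intros Hw Hp Hq.
  destruct (on_segment_param _ _ Hp) as [tp [Tp [Xp Yp]]].
  destruct (on_segment_param _ _ Hq) as [tq [Tq [Xq Yq]]].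
  destruct e as [[ax ay] [bx by_]]; simpl in *. unfold cross.
  assert (Hn : 0 <= (bx - ax) * (bx - ax) + (by_ - ay) * (by_ - ay))
    by (pose proof (Rle_0_sqr (bx - ax)); pose proof (Rle_0_sqr (by_ - ay));
        unfold Rsqr in *; lra).
  destruct Hw as [-> | ->]; simpl; rewrite Xp, Yp, Xq, Yq; split; try ring.
  - replace ((ax + tp * (bx - ax) - ax) * (ax + tq * (bx - ax) - ax) +
             (ay + tp * (by_ - ay) - ay) * (ay + tq * (by_ - ay) - ay))
      with ((tp * tq) * ((bx - ax) * (bx - ax) + (by_ - ay) * (by_ - ay))) by ring.
    apply Rmult_le_pos; [apply Rmult_le_pos|]; lra.
  - replace ((ax + tp * (bx - ax) - bx) * (ax + tq * (bx - ax) - bx) +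
             (ay + tp * (by_ - ay) - by_) * (ay + tq * (by_ - ay) - by_))
      with (((1 - tp) * (1 - tq)) * ((bx - ax) * (bx - ax) + (by_ - ay) * (by_ - ay))) by ring.
    apply Rmult_le_pos; [apply Rmult_le_pos|]; lra.
Qed.

Definition in_rect (x0 x1 y0 y1 : R) (p : point) : Prop :=
  x0 <= fst p <= x1 /\ y0 <= snd p <= y1.

Definition on_boundary (x0 x1 y0 y1 : R) (p : point) : Prop :=
  in_rect x0 x1 y0 y1 p /\
  (fst p = x0 \/ fst p = x1 \/ snd p = y0 \/ snd p = y1).

Definition diagonal (p q : point) : Prop := fst p <> fst q /\ snd p <> snd q.

Section Rectangle.

Variables x0 x1 y0 y1 : R.
Local Notation rect := (in_rect x0 x1 y0 y1).
Local Notation bd := (on_boundary x0 x1 y0 y1).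

Lemma in_rect_interpolate s t nu : rect s -> rect t -> 0 <= nu <= 1 ->
  rect (fst s + nu * (fst t - fst s), snd s + nu * (snd t - snd s)).
Proof. unfold in_rect; simpl; intros; split; split; nra. Qed.

Lemma boundary_between_same_side u v w mu : bd u -> rect v -> rect w -> 0 < mu < 1 ->
  fst u = fst v + mu * (fst w - fst v) -> snd u = snd v + mu * (snd w - snd v) ->
  (fst v = fst u /\ fst w = fst u) \/ (snd v = snd u /\ snd w = snd u).
Proof.
  unfold on_boundary, in_rect. intros [[Hx Hy] Hs] [Hvx Hvy] [Hwx Hwy] Hm Ex Ey.
  (* on the side x = x0, the two nonnegative numbers fst v - x0, fst w - x0 have a
     vanishing convex combination, so both vanish; similarly for the other sides *)
  assert (Hconv : forall a b, 0 <= a -> 0 <= b -> (1 - mu) * a + mu * b = 0 ->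
                  a = 0 /\ b = 0) by (intros; nra).
  destruct Hs as [H|[H|[H|H]]].
  - left. destruct (Hconv (fst v - x0) (fst w - x0)); lra.
  - left. destruct (Hconv (x1 - fst v) (x1 - fst w)); lra.
  - right. destruct (Hconv (snd v - y0) (snd w - y0)); lra.
  - right. destruct (Hconv (y1 - snd v) (y1 - snd w)); lra.
Qed.

Lemma boundary_collinear_axis p q z lam : bd p -> bd q -> bd z -> z <> p -> z <> q ->
  fst z = fst p + lam * (fst q - fst p) -> snd z = snd p + lam * (snd q - snd p) ->
  fst p = fst q \/ snd p = snd q.
Proof.
  intros Bp Bq Bz Nzp Nzq Ex Ey.
  destruct p as [px py], q as [qx qy], z as [zx zy]; simpl in *.
  assert (lam <> 0) by (intro; subst; apply Nzp; f_equal; lra).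
  assert (lam <> 1) by (intro; subst; apply Nzq; f_equal; lra).
  destruct (Rlt_or_le lam 0) as [Hn|Hn]; [|destruct (Rlt_or_le 1 lam) as [Hg|Hg]].
  - (* p lies between z and q *)
    set (mu := - lam / (- lam + 1)).
    assert (Hmu : 0 < mu < 1) by (apply ratio_in_unit; lra).
    assert (E1 : px = zx + mu * (qx - zx)) by (unfold mu; rewrite Ex; field; lra).
    assert (E2 : py = zy + mu * (qy - zy)) by (unfold mu; rewrite Ey; field; lra).
    destruct (boundary_between_same_side (px,py) (zx,zy) (qx,qy) mu Bp (proj1 Bz) (proj1 Bq)
                Hmu E1 E2) as [[A B]|[A B]]; simpl in *; auto.
  - (* q lies between p and z *)
    set (mu := 1 / (1 + (lam - 1))).
    assert (Hmu : 0 < mu < 1) by (apply ratio_in_unit; lra).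
    assert (E1 : qx = px + mu * (zx - px)) by (unfold mu; rewrite Ex; field; lra).
    assert (E2 : qy = py + mu * (zy - py)) by (unfold mu; rewrite Ey; field; lra).
    destruct (boundary_between_same_side (qx,qy) (px,py) (zx,zy) mu Bq (proj1 Bp) (proj1 Bz)
                Hmu E1 E2) as [[A B]|[A B]]; simpl in *; auto.
  - (* z lies between p and q *)
    destruct (boundary_between_same_side (zx,zy) (px,py) (qx,qy) lam Bz (proj1 Bp) (proj1 Bq))
      as [[A B]|[A B]]; simpl in *; auto; lra.
Qed.

Lemma diagonal_off_line p q z : bd p -> bd q -> bd z -> diagonal p q -> z <> p -> z <> q ->
  cross p q z <> 0.
Proof.
  intros Bp Bq Bz [D1 D2] Nzp Nzq Hz.
  assert (Npq : p <> q) by (intro; subst; auto).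
  destruct (cross_zero_on_line p q z Npq Hz) as [lam [E1 E2]].
  destruct (boundary_collinear_axis p q z lam Bp Bq Bz Nzp Nzq E1 E2); auto.
Qed.

Lemma segment_three_boundary_points p q z e : bd p -> bd q -> bd z ->
  p <> q -> z <> p -> z <> q -> on_segment p e -> on_segment q e -> on_segment z e ->
  ~ diagonal p q.
Proof.
  intros Bp Bq Bz Npq Nzp Nzq Hp Hq Hz [D1 D2].
  destruct (segment_collinear p q z e Hp Hq Hz Npq) as [lam [Ex Ey]].
  destruct (boundary_collinear_axis p q z lam Bp Bq Bz Nzp Nzq Ex Ey); auto.
Qed.

Lemma boundary_not_inside_diagonal u s t nu : bd u -> rect s -> rect t -> diagonal s t ->
  0 < nu < 1 ->
  fst u = fst s + nu * (fst t - fst s) -> snd u = snd s + nu * (snd t - snd s) -> False.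
Proof.
  intros Bu Rs Rt [N1 N2] Hn E1 E2.
  destruct (boundary_between_same_side u s t nu Bu Rs Rt Hn E1 E2) as [[A B]|[A B]].
  - apply N1; lra.
  - apply N2; lra.
Qed.

Lemma diagonal_line_leaves u v X lam : bd u -> bd v -> rect X -> diagonal u v ->
  lam < 0 \/ 1 < lam ->
  fst X = fst u + lam * (fst v - fst u) -> snd X = snd u + lam * (snd v - snd u) -> False.
Proof.
  (* it suffices to treat lam < 0: for lam > 1 exchange u and v *)
  assert (Before : forall u v X lam, bd u -> bd v -> rect X -> diagonal u v -> lam < 0 ->
    fst X = fst u + lam * (fst v - fst u) -> snd X = snd u + lam * (snd v - snd u) -> False).
  { intros u' v' X' lam' Bu Bv RX [N1 N2] Hl E1 E2.
    (* u' lies strictly between X' and v' *)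
    set (mu := - lam' / (- lam' + 1)).
    assert (Hmu : 0 < mu < 1) by (apply ratio_in_unit; lra).
    destruct (boundary_between_same_side u' X' v' mu Bu RX (proj1 Bv) Hmu) as [[A B]|[A B]].
    - unfold mu. rewrite E1. field. lra.
    - unfold mu. rewrite E2. field. lra.
    - apply N1; lra.
    - apply N2; lra. }
  intros Bu Bv RX [N1 N2] [Hl|Hl] E1 E2.
  - apply (Before u v X lam); auto. split; auto.
  - apply (Before v u X (1 - lam)); auto; try lra. split; auto.
Qed.

Lemma chords_cannot_cross p q s t e1 e2 : bd p -> bd q -> bd s -> bd t ->
  on_segment p e1 -> on_segment q e1 -> on_segment s e2 -> on_segment t e2 ->
  fst e1 <> snd e1 -> diagonal p q -> diagonal s t ->
  (forall X, on_segment X e1 -> on_segment X e2 -> is_endpoint X e1) ->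
  0 < cross p q s -> cross p q t < 0 -> False.
Proof.
  intros Bp Bq Bs Bt Hp Hq Hs Ht Ne Dpq Dst NC Gs Gt.
  (* X: the point of segment st on the line pq *)
  set (nu := cross p q s / (cross p q s + - cross p q t)).
  assert (Hnu : 0 < nu < 1) by (apply ratio_in_unit; lra).
  set (X := (fst s + nu * (fst t - fst s), snd s + nu * (snd t - snd s))).
  assert (GX : cross p q X = 0) by (unfold X; rewrite cross_affine; unfold nu; field; lra).
  assert (RX : rect X) by (apply in_rect_interpolate; [apply Bs|apply Bt|lra]).
  assert (Npq : p <> q) by (intro; subst; destruct Dpq; auto).
  destruct (cross_zero_on_line p q X Npq GX) as [lam [E1 E2]].
  destruct (Rlt_or_le lam 0) as [H0|H0].
  { apply (diagonal_line_leaves p q X lam); auto. }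
  destruct (Rlt_or_le 1 lam) as [H1|H1].
  { apply (diagonal_line_leaves p q X lam); auto. }
  (* X = p or X = q would put a boundary point strictly inside the diagonal st *)
  destruct (Req_dec lam 0) as [->|L0].
  { assert (HX : X = p) by (apply point_eq; lra).
    apply (boundary_not_inside_diagonal X s t nu); auto; [rewrite HX; auto|apply Bs|apply Bt]. }
  destruct (Req_dec lam 1) as [->|L1].
  { assert (HX : X = q) by (apply point_eq; lra).
    apply (boundary_not_inside_diagonal X s t nu); auto; [rewrite HX; auto|apply Bs|apply Bt]. }
  assert (OX1 : on_segment X e1) by (apply (on_segment_interpolate p q X e1 lam); auto; lra).
  assert (OX2 : on_segment X e2) by (apply (on_segment_interpolate s t X e2 nu); auto; lra).
  apply (segment_interior_not_endpoint p q X e1 lam Hp Hq Ne Npq); auto; lra.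
Qed.

Lemma left_side_nested p q s t z : bd p -> bd q -> rect s -> rect z -> diagonal p q ->
  cross s t p < 0 -> cross s t q < 0 -> 0 < cross p q s ->
  0 < cross s t z -> cross p q z < 0 -> False.
Proof.
  intros Bp Bq Rs Rz Dpq Hp Hq Gs Hz Gz.
  (* Y: the point of segment zs on the line pq; it lies strictly left of st *)
  set (nu := (- cross p q z) / (- cross p q z + cross p q s)).
  assert (Hnu : 0 < nu < 1) by (apply ratio_in_unit; lra).
  set (Y := (fst z + nu * (fst s - fst z), snd z + nu * (snd s - snd z))).
  assert (GY : cross p q Y = 0) by (unfold Y; rewrite cross_affine; unfold nu; field; lra).
  assert (HY : 0 < cross s t Y) by (unfold Y; rewrite cross_affine, cross_first; nra).
  assert (RY : rect Y) by (apply in_rect_interpolate; auto; lra).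
  assert (Npq : p <> q) by (intro; subst; destruct Dpq; auto).
  clearbody Y. destruct (cross_zero_on_line p q Y Npq GY) as [lam [E1 E2]].
  destruct (Rlt_or_le lam 0) as [H0|H0].
  { apply (diagonal_line_leaves p q Y lam); auto. }
  destruct (Rlt_or_le 1 lam) as [H1|H1].
  { apply (diagonal_line_leaves p q Y lam); auto. }
  (* but the points of segment pq lie strictly right of st *)
  assert (cross s t Y = cross s t p + lam * (cross s t q - cross s t p)).
  { replace Y with (fst p + lam * (fst q - fst p), snd p + lam * (snd q - snd p)).
    - apply cross_affine.
    - apply point_eq; simpl; lra. }
  nra.
Qed.

Lemma corner_on_left p q : rect p -> rect q -> diagonal p q ->
  exists c, (c = (x0,y0) \/ c = (x0,y1) \/ c = (x1,y0) \/ c = (x1,y1)) /\ 0 < cross p q c.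
Proof.
  unfold in_rect, cross. intros [Px Py] [Qx Qy] [N1 N2].
  set (A := - (snd q - snd p)). set (B := fst q - fst p).
  assert (HA : A <> 0) by (unfold A; lra).
  assert (HB : B <> 0) by (unfold B; lra).
  set (Mx := (fst p + fst q) / 2). set (My := (snd p + snd q) / 2).
  assert (x0 < Mx < x1) by (unfold Mx; lra).
  assert (y0 < My < y1) by (unfold My; lra).
  (* the cross product is the affine function A (x - Mx) + B (y - My) *)
  assert (Hc : forall cx cy, (fst q - fst p) * (cy - snd p) - (snd q - snd p) * (cx - fst p)
     = A * (cx - Mx) + B * (cy - My)) by (intros; unfold A, B, Mx, My; field).
  destruct (Rlt_or_le 0 A) as [a|a]; destruct (Rlt_or_le 0 B) as [b|b].
  - exists (x1,y1). split; [tauto|]. simpl. rewrite Hc. nra.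
  - exists (x1,y0). split; [tauto|]. simpl. rewrite Hc. assert (B < 0) by lra. nra.
  - exists (x0,y1). split; [tauto|]. simpl. rewrite Hc. assert (A < 0) by lra. nra.
  - exists (x0,y0). split; [tauto|]. simpl. rewrite Hc.
    assert (A < 0) by lra. assert (B < 0) by lra. nra.
Qed.

End Rectangle.

Lemma filter_length_mono {X} (l : list X) (f g : X -> bool) :
  (forall z, In z l -> f z = true -> g z = true) ->
  (length (filter f l) <= length (filter g l))%nat.
Proof.
  induction l as [|a l IH]; simpl; intros H; [lia|].
  specialize (IH (fun z Hz => H z (or_intror Hz))).
  destruct (f a) eqn:Fa.
  - rewrite (H a (or_introl eq_refl) Fa). simpl. lia.
  - destruct (g a); simpl; lia.
Qed.

Lemma filter_length_strict {X} (l : list X) (f g : X -> bool) z0 :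
  (forall z, In z l -> f z = true -> g z = true) ->
  In z0 l -> g z0 = true -> f z0 = false ->
  (length (filter f l) < length (filter g l))%nat.
Proof.
  induction l as [|a l IH]; simpl; intros H Hin G0 F0; [tauto|].
  destruct Hin as [<-|Hin].
  - rewrite F0, G0. simpl.
    pose proof (filter_length_mono l f g (fun z Hz => H z (or_intror Hz))). lia.
  - specialize (IH (fun z Hz => H z (or_intror Hz)) Hin G0 F0).
    destruct (f a) eqn:Fa.
    + rewrite (H a (or_introl eq_refl) Fa). simpl. lia.
    + destruct (g a); simpl; lia.
Qed.

Record boundary_matching (x0 x1 y0 y1 : R) (E : list edge) (B : list point) : Prop := {
  bm_boundary : forall z, In z B -> on_boundary x0 x1 y0 y1 z;
  bm_corners : In (x0,y0) B /\ In (x0,y1) B /\ In (x1,y0) B /\ In (x1,y1) B;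
  bm_partner : forall z, In z B -> exists t e, In t B /\ In e E /\ t <> z /\
                 on_segment z e /\ on_segment t e;
  bm_diagonal : forall e p q, In e E -> In p B -> In q B -> p <> q ->
                  on_segment p e -> on_segment q e -> diagonal p q;
  bm_unique : forall z e e', In z B -> In e E -> In e' E -> on_segment z e ->
                on_segment z e' -> e = e'
}.

(* Every chord has a corner strictly on its left;
   the chord through that corner lies entirely on the left side, and (oriented suitably)
   has strictly fewer points of [B] on its own left.  This infinite descent is absurd. *)
Section NoncrossingMatching.

Variables (x0 x1 y0 y1 : R) (E : list edge) (B : list point).
Hypothesis HM : boundary_matching x0 x1 y0 y1 E B.
Hypothesis Hnondeg : forall e, In e E -> fst e <> snd e.
Hypothesis NC : noncrossing E.

Definition chord (e : edge) (p q : point) : Prop :=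
  In e E /\ In p B /\ In q B /\ p <> q /\ on_segment p e /\ on_segment q e.

Definition left_side (p q : point) : list point :=
  filter (fun z => if Rlt_dec 0 (cross p q z) then true else false) B.

Lemma chord_diagonal e p q : chord e p q -> diagonal p q.
Proof. intros (Ie & Ip & Iq & Npq & Op & Oq). apply (bm_diagonal _ _ _ _ _ _ HM e); auto. Qed.

Lemma partner_same_side e1 p q e2 s t : chord e1 p q -> chord e2 s t -> e1 <> e2 ->
  0 < cross p q s -> 0 < cross p q t.
Proof.
  intros C1 C2 Ne Gs.
  pose proof C1 as (Ie1 & Ip & Iq & Npq & Op & Oq).
  pose proof C2 as (Ie2 & Is & It & Nst & Os & Ot).
  pose proof (bm_boundary _ _ _ _ _ _ HM) as Hbd.
  assert (Ntp : t <> p) by (intro; subst t; apply Ne; apply (bm_unique _ _ _ _ _ _ HM p); auto).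
  assert (Ntq : t <> q) by (intro; subst t; apply Ne; apply (bm_unique _ _ _ _ _ _ HM q); auto).
  pose proof (diagonal_off_line x0 x1 y0 y1 p q t (Hbd p Ip) (Hbd q Iq) (Hbd t It)
                (chord_diagonal e1 p q C1) Ntp Ntq).
  destruct (Rtotal_order 0 (cross p q t)) as [G|[G|G]]; [auto|congruence|exfalso].
  apply (chords_cannot_cross x0 x1 y0 y1 p q s t e1 e2 (Hbd p Ip) (Hbd q Iq) (Hbd s Is)
           (Hbd t It) Op Oq Os Ot (Hnondeg e1 Ie1) (chord_diagonal e1 p q C1)
           (chord_diagonal e2 s t C2)); auto.
  intros X H1 H2. exact (proj1 (NC e1 e2 X Ie1 Ie2 Ne H1 H2)).
Qed.

Lemma descent_oriented e1 p q e2 s t : chord e1 p q -> chord e2 s t -> e1 <> e2 ->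
  0 < cross p q s -> cross s t p < 0 ->
  (length (left_side s t) < length (left_side p q))%nat.
Proof.
  intros C1 C2 Ne Gs Hp.
  pose proof C1 as (Ie1 & Ip & Iq & Npq & Op & Oq).
  pose proof C2 as (Ie2 & Is & It & Nst & Os & Ot).
  pose proof (bm_boundary _ _ _ _ _ _ HM) as Hbd.
  assert (Hq : cross s t q < 0).
  { assert (C2' : chord e2 t s) by (repeat split; auto).
    assert (Gq : 0 < cross t s q).
    { apply (partner_same_side e2 t s e1 p q C2' C1 (not_eq_sym Ne)).
      rewrite cross_swap. lra. }
    rewrite cross_swap in Gq. lra. }
  apply filter_length_strict with s; auto.
  - intros z Iz. destruct (Rlt_dec 0 (cross s t z)) as [Hz|Hz]; [|discriminate]. intros _.
    destruct (Rlt_dec 0 (cross p q z)) as [Gz|Gz]; [reflexivity|exfalso].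
    assert (z <> p) by (intro; subst; lra). assert (z <> q) by (intro; subst; lra).
    pose proof (diagonal_off_line x0 x1 y0 y1 p q z (Hbd p Ip) (Hbd q Iq) (Hbd z Iz)
                  (chord_diagonal e1 p q C1) H H0).
    apply (left_side_nested x0 x1 y0 y1 p q s t z); auto;
      [apply (Hbd s Is) | apply (Hbd z Iz) | apply (chord_diagonal e1) | lra]; auto.
  - destruct (Rlt_dec 0 (cross p q s)); [reflexivity|lra].
  - rewrite cross_first. destruct (Rlt_dec 0 0); [lra|reflexivity].
Qed.

Lemma descent_step e1 p q : chord e1 p q ->
  exists e2 s t, chord e2 s t /\ (length (left_side s t) < length (left_side p q))%nat.
Proof.
  intros C1. pose proof C1 as (Ie1 & Ip & Iq & Npq & Op & Oq).
  pose proof (bm_boundary _ _ _ _ _ _ HM) as Hbd.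
  destruct (corner_on_left x0 x1 y0 y1 p q (proj1 (Hbd p Ip)) (proj1 (Hbd q Iq))
              (chord_diagonal e1 p q C1)) as [s [Hs Gs]].
  assert (Is : In s B)
    by (destruct (bm_corners _ _ _ _ _ _ HM) as (? & ? & ? & ?);
        destruct Hs as [ -> | [ -> | [ -> | -> ] ] ]; auto).
  destruct (bm_partner _ _ _ _ _ _ HM s Is) as [t [e2 [It [Ie2 [Nts [Os Ot]]]]]].
  assert (C2 : chord e2 s t) by (repeat split; auto).
  assert (Nsp : s <> p) by (intro; subst; rewrite cross_first in Gs; lra).
  assert (Nsq : s <> q) by (intro; subst; rewrite cross_second in Gs; lra).
  assert (Ne : e1 <> e2).
  { intro; subst e2.
    apply (segment_three_boundary_points x0 x1 y0 y1 p q s e1); auto.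
    apply (chord_diagonal e1 p q C1). }
  assert (Gt : 0 < cross p q t) by (apply (partner_same_side e1 p q e2 s t); auto).
  assert (Ntp : t <> p) by (intro; subst; rewrite cross_first in Gt; lra).
  assert (Hp0 : cross s t p <> 0)
    by (apply (diagonal_off_line x0 x1 y0 y1); auto; apply (chord_diagonal e2); auto).
  destruct (Rlt_or_le (cross s t p) 0) as [Hp|Hp].
  - exists e2, s, t. split; auto. apply (descent_oriented e1 p q e2 s t); auto.
  - exists e2, t, s. assert (C2' : chord e2 t s) by (repeat split; auto).
    split; auto. apply (descent_oriented e1 p q e2 t s); auto.
    rewrite cross_swap. lra.
Qed.

Theorem no_noncrossing_boundary_matching : False.
Proof.
  destruct (bm_corners _ _ _ _ _ _ HM) as [C00 _].
  destruct (bm_partner _ _ _ _ _ _ HM _ C00) as [t [e [It [Ie [Nt [O1 O2]]]]]].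
  assert (Descent : forall N e p q, chord e p q -> (length (left_side p q) <= N)%nat -> False).
  { induction N as [|N IH]; intros e1 p q C1 Hlen;
      destruct (descent_step e1 p q C1) as [e2 [s [t' [C2 Hlt]]]].
    - lia.
    - apply (IH e2 s t' C2). lia. }
  apply (Descent (length (left_side (x0,y0) t)) e (x0,y0) t); [repeat split; auto | apply le_n].
Qed.

End NoncrossingMatching.

Lemma exit_edge (E : list edge) (pi : point -> R) (S : list R) u v :
  clos_refl_trans point (adj E) u v -> In (pi u) S -> ~ In (pi v) S ->
  exists g a b, In g E /\ (g = (a,b) \/ g = (b,a)) /\ In (pi a) S /\ ~ In (pi b) S.
Proof.
  intros H. apply clos_rt_rt1n in H. induction H as [x|x y z Hxy Hyz IH]; intros Hu Hv.
  - contradiction.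
  - destruct (classic (In (pi y) S)) as [Hy|Hy]; auto.
    destruct Hxy as [Hxy|Hxy]; [exists (x, y)|exists (y, x)]; exists x, y; auto.
Qed.

(* Growing a connected set of levels from the level of v0: while fewer than |W| levels
   are collected, a path to a vertex at a missing level of W leaves the collected set
   along an edge, which adds one level and one level-changing edge. *)
Lemma grow_levels (V : list point) (E : list edge) (pi : point -> R) (W : list R) v0 :
  (forall u v, In u V -> In v V -> clos_refl_trans point (adj E) u v) ->
  NoDup W -> In v0 V -> (forall w, In w W -> exists v, In v V /\ pi v = w) ->
  forall k, (k < length W)%nat ->
  exists L G, NoDup L /\ length L = S k /\ In (pi v0) L /\ NoDup G /\ incl G E /\
    length G = k /\ forall g, In g G -> In (pi (fst g)) L /\ In (pi (snd g)) L /\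
                                  pi (fst g) <> pi (snd g).
Proof.
  intros Hconn NDW Iv0 Hlev.
  induction k as [|k IH]; intros Hk.
  - exists [pi v0], []. repeat split; simpl; auto using NoDup_nil.
    + constructor; [intros []|constructor].
    + intros x [].
  - destruct IH as [L [G [NDL [LL [I0 [NDG [IG [LG HG]]]]]]]]; [lia|].
    assert (exists w, In w W /\ ~ In w L) as [w [Iw Nw]].
    { apply NNPP. intro Hn.
      assert (Hsub : incl W L) by (intros x Hx; apply NNPP; intro; apply Hn; eauto).
      pose proof (NoDup_incl_length NDW Hsub). lia. }
    destruct (Hlev w Iw) as [v [Iv Pv]].
    destruct (exit_edge E pi L v0 v (Hconn v0 v Iv0 Iv)) as [g [a [b [Ig [Hab [Ia Nb]]]]]];
      [auto | rewrite Pv; auto |].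
    assert (HG' : forall g', In g' (g :: G) -> In (pi (fst g')) (pi b :: L) /\
                    In (pi (snd g')) (pi b :: L) /\ pi (fst g') <> pi (snd g')).
    { intros g' [<-|Hg'].
      - destruct Hab as [-> | ->]; simpl; repeat split; auto; intro Heq;
          [rewrite Heq in Ia | rewrite <- Heq in Ia]; tauto.
      - destruct (HG g' Hg') as [A [B C]]. simpl; auto. }
    exists (pi b :: L), (g :: G).
    split; [constructor; auto|]. split; [simpl; lia|]. split; [right; auto|].
    split.
    { constructor; auto. intro Hin. destruct (HG g Hin) as [A [B _]].
      destruct Hab as [-> | ->]; simpl in *; tauto. }
    split; [intros x [<-|Hx]; auto|]. split; [simpl; lia|]. exact HG'.
Qed.

Lemma level_changing_edges (V : list point) (E : list edge) (pi : point -> R) (W : list R) :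
  (forall u v, In u V -> In v V -> clos_refl_trans point (adj E) u v) ->
  NoDup W -> W <> [] -> (forall w, In w W -> exists v, In v V /\ pi v = w) ->
  exists G, NoDup G /\ incl G E /\ (length W <= S (length G))%nat /\
    (forall g, In g G -> pi (fst g) <> pi (snd g)).
Proof.
  intros Hconn NDW NW Hlev.
  destruct W as [|w0 W']; [congruence|].
  destruct (Hlev w0 (or_introl eq_refl)) as [v0 [Iv0 _]].
  destruct (grow_levels V E pi (w0 :: W') v0 Hconn NDW Iv0 Hlev (length W'))
    as [L [G [_ [_ [_ [NDG [IG [LG HG]]]]]]]]; [simpl; lia|].
  exists G. repeat split; auto.
  - simpl; lia.
  - intros g Hg; apply HG; auto.
Qed.

(* If for each level j = 1..K some edge lies within level j, there are K such edges, and
   together with the K-1 level-changing edges they give 2K-1 distinct edges. *)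
Lemma level_edges (E : list edge) (pi : point -> R) (l : list nat) :
  NoDup l ->
  (forall j, In j l -> exists e, In e E /\ pi (fst e) = INR j /\ pi (snd e) = INR j) ->
  exists H, NoDup H /\ incl H E /\ length H = length l /\
    forall h, In h H -> exists j, In j l /\ pi (fst h) = INR j /\ pi (snd h) = INR j.
Proof.
  induction l as [|j l IH]; intros ND Hj.
  - exists []. repeat split; auto using NoDup_nil; intros x [].
  - inversion ND as [|? ? Nj ND']; subst.
    destruct IH as [H [N1 [I1 [L1 P1]]]]; auto.
    { intros j' Hj'. apply Hj. right; auto. }
    destruct (Hj j (or_introl eq_refl)) as [e [Ie [A B]]].
    exists (e :: H). repeat split.
    + constructor; auto. intro He. destruct (P1 e He) as [j' [Ij' [C D]]].
      rewrite A in C. apply INR_eq in C. subst. contradiction.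
    + intros x [<-|Hx]; auto.
    + simpl; lia.
    + intros h [<-|Hh].
      * exists j. split; [left|]; auto.
      * destruct (P1 h Hh) as [j' [? ?]]. exists j'. split; [right|]; auto.
Qed.

Lemma level_bound (V : list point) (E : list edge) (pi : point -> R) (K : nat) :
  (forall u v, In u V -> In v V -> clos_refl_trans point (adj E) u v) ->
  (forall e, In e E -> In (fst e) V) -> (1 <= K)%nat ->
  (forall j, (1 <= j <= K)%nat ->
     exists e, In e E /\ pi (fst e) = INR j /\ pi (snd e) = INR j) ->
  (2 * K - 1 <= length E)%nat.
Proof.
  intros Hconn HV HK Hj.
  destruct (level_edges E pi (seq 1 K) (seq_NoDup K 1)) as [H [N1 [I1 [L1 P1]]]].
  { intros j Ij. apply in_seq in Ij. apply Hj. lia. }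
  destruct (level_changing_edges V E pi (map INR (seq 1 K)) Hconn) as [G [NG [IG [LG PG]]]].
  - apply Injective_map_NoDup; [intros x y; apply INR_eq | apply seq_NoDup].
  - destruct K; [lia|]. simpl. discriminate.
  - intros w Hw. apply in_map_iff in Hw. destruct Hw as [j [<- Ij]].
    apply in_seq in Ij. destruct (Hj j ltac:(lia)) as [e [Ie [A B]]].
    exists (fst e). split; auto.
  - rewrite length_map, length_seq in LG. rewrite length_seq in L1.
    assert (ND : NoDup (H ++ G)).
    { apply NoDup_app; auto. intros h Hh HG.
      destruct (P1 h Hh) as [j [_ [A B]]]. apply (PG h HG). congruence. }
    assert (Hsub : incl (H ++ G) E) by (intros x Hx; apply in_app_or in Hx; destruct Hx; auto).
    pose proof (NoDup_incl_length ND Hsub). rewrite length_app in *. lia.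
Qed.

Definition grid_pt (i j : nat) : point := (INR i, INR j).

Lemma grid_pt_inj i j i' j' : grid_pt i j = grid_pt i' j' -> i = i' /\ j = j'.
Proof. unfold grid_pt. intros H. inversion H. split; apply INR_eq; auto. Qed.

Definition spans_row (n : nat) (e : edge) (j : nat) : Prop :=
  exists i i', (1 <= i <= n)%nat /\ (1 <= i' <= n)%nat /\ i <> i' /\
    on_segment (grid_pt i j) e /\ on_segment (grid_pt i' j) e.

Definition spans_col (m : nat) (e : edge) (i : nat) : Prop :=
  exists j j', (1 <= j <= m)%nat /\ (1 <= j' <= m)%nat /\ j <> j' /\
    on_segment (grid_pt i j) e /\ on_segment (grid_pt i j') e.

Lemma spans_row_level n e j : spans_row n e j -> snd (fst e) = INR j /\ snd (snd e) = INR j.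
Proof.
  intros [i [i' [_ [_ [Ni [O1 O2]]]]]].
  assert (grid_pt i j <> grid_pt i' j) by (intro H; apply grid_pt_inj in H; lia).
  pose proof (segment_horizontal _ _ _ O1 O2 H eq_refl) as Hh.
  pose proof (on_horizontal_segment _ _ O1 Hh). simpl in *. split; lra.
Qed.

Lemma spans_col_level m e i : spans_col m e i -> fst (fst e) = INR i /\ fst (snd e) = INR i.
Proof.
  intros [j [j' [_ [_ [Nj [O1 O2]]]]]].
  assert (grid_pt i j <> grid_pt i j') by (intro H; apply grid_pt_inj in H; lia).
  pose proof (segment_vertical _ _ _ O1 O2 H eq_refl) as Hv.
  pose proof (on_vertical_segment _ _ O1 Hv). simpl in *. split; lra.
Qed.

Lemma spans_row_cover n e j x y : spans_row n e j -> on_segment (grid_pt x y) e -> y = j.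
Proof.
  intros H O. destruct (spans_row_level _ _ _ H) as [A B].
  pose proof (on_horizontal_segment _ _ O (eq_trans A (eq_sym B))). simpl in *.
  apply INR_eq. lra.
Qed.

Lemma spans_col_cover m e i x y : spans_col m e i -> on_segment (grid_pt x y) e -> x = i.
Proof.
  intros H O. destruct (spans_col_level _ _ _ H) as [A B].
  pose proof (on_vertical_segment _ _ O (eq_trans A (eq_sym B))). simpl in *.
  apply INR_eq. lra.
Qed.

Lemma spans_row_unique n e j j' : spans_row n e j -> spans_row n e j' -> j = j'.
Proof.
  intros H1 H2. destruct (spans_row_level _ _ _ H1), (spans_row_level _ _ _ H2).
  apply INR_eq. lra.
Qed.

Lemma spans_col_unique m e i i' : spans_col m e i -> spans_col m e i' -> i = i'.
Proof.
  intros H1 H2. destruct (spans_col_level _ _ _ H1), (spans_col_level _ _ _ H2).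
  apply INR_eq. lra.
Qed.

Lemma spans_row_not_col n m e j i : spans_row n e j -> spans_col m e i -> False.
Proof.
  intros Hr Hc. destruct (spans_col_level _ _ _ Hc) as [C D].
  destruct Hr as [x [x' [_ [_ [Nx [O1 O2]]]]]].
  pose proof (on_vertical_segment _ _ O1 (eq_trans C (eq_sym D))).
  pose proof (on_vertical_segment _ _ O2 (eq_trans C (eq_sym D))). simpl in *.
  apply Nx. apply INR_eq. lra.
Qed.

Definition spanned_row (n : nat) (E : list edge) (j : nat) : Prop := exists e, In e E /\ spans_row n e j.
Definition spanned_col (m : nat) (E : list edge) (i : nat) : Prop := exists e, In e E /\ spans_col m e i.

Definition spanned_rows (n m : nat) (E : list edge) : list nat :=
  filter (fun j => decide (spanned_row n E j)) (seq 1 m).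
Definition free_rows (n m : nat) (E : list edge) : list nat :=
  filter (fun j => negb (decide (spanned_row n E j))) (seq 1 m).
Definition spanned_cols (n m : nat) (E : list edge) : list nat :=
  filter (fun i => decide (spanned_col m E i)) (seq 1 n).
Definition free_cols (n m : nat) (E : list edge) : list nat :=
  filter (fun i => negb (decide (spanned_col m E i))) (seq 1 n).

Lemma in_spanned_rows n m E j :
  In j (spanned_rows n m E) <-> (1 <= j <= m)%nat /\ spanned_row n E j.
Proof.
  unfold spanned_rows. rewrite filter_In, in_seq, decide_true.
  split; intros [A B]; split; auto; lia.
Qed.

Lemma in_free_rows n m E j :
  In j (free_rows n m E) <-> (1 <= j <= m)%nat /\ ~ spanned_row n E j.
Proof.
  unfold free_rows. rewrite filter_In, in_seq, Bool.negb_true_iff, decide_false.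
  split; intros [A B]; split; auto; lia.
Qed.

Lemma in_spanned_cols n m E i :
  In i (spanned_cols n m E) <-> (1 <= i <= n)%nat /\ spanned_col m E i.
Proof.
  unfold spanned_cols. rewrite filter_In, in_seq, decide_true.
  split; intros [A B]; split; auto; lia.
Qed.

Lemma in_free_cols n m E i :
  In i (free_cols n m E) <-> (1 <= i <= n)%nat /\ ~ spanned_col m E i.
Proof.
  unfold free_cols. rewrite filter_In, in_seq, Bool.negb_true_iff, decide_false.
  split; intros [A B]; split; auto; lia.
Qed.

Lemma rows_split n m E : (length (free_rows n m E) + length (spanned_rows n m E) = m)%nat.
Proof.
  unfold free_rows, spanned_rows.
  pose proof (length_filter_split (fun j => decide (spanned_row n E j)) (seq 1 m)) as H.
  rewrite length_seq in H. cbv beta in H. lia.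
Qed.

Lemma cols_split n m E : (length (free_cols n m E) + length (spanned_cols n m E) = n)%nat.
Proof.
  unfold free_cols, spanned_cols.
  pose proof (length_filter_split (fun i => decide (spanned_col m E i)) (seq 1 n)) as H.
  rewrite length_seq in H. cbv beta in H. lia.
Qed.

Lemma free_rows_nodup n m E : NoDup (free_rows n m E).
Proof. apply NoDup_filter, seq_NoDup. Qed.

Lemma free_cols_nodup n m E : NoDup (free_cols n m E).
Proof. apply NoDup_filter, seq_NoDup. Qed.

Lemma all_rows_spanned n m V E : geometric_tree V E -> (1 <= m)%nat ->
  free_rows n m E = [] -> (2 * m - 1 <= length E)%nat.
Proof.
  intros (_ & _ & HE & _ & _ & Hconn & _) Hm HR.
  apply (level_bound V E snd m Hconn); auto.
  - intros e Ie. apply HE; auto.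
  - intros j Hj. assert (spanned_row n E j) as [e [Ie He]].
    { apply NNPP. intro Hn. assert (Hf : In j (free_rows n m E)) by (apply in_free_rows; auto).
      rewrite HR in Hf. destruct Hf. }
    exists e. split; auto. apply spans_row_level in He. tauto.
Qed.

Lemma all_cols_spanned n m V E : geometric_tree V E -> (1 <= n)%nat ->
  free_cols n m E = [] -> (2 * n - 1 <= length E)%nat.
Proof.
  intros (_ & _ & HE & _ & _ & Hconn & _) Hn HC.
  apply (level_bound V E fst n Hconn); auto.
  - intros e Ie. apply HE; auto.
  - intros i Hi. assert (spanned_col m E i) as [e [Ie He]].
    { apply NNPP. intro Hn'. assert (Hf : In i (free_cols n m E)) by (apply in_free_cols; auto).
      rewrite HC in Hf. destruct Hf. }
    exists e. split; auto. apply spans_col_level in He. tauto.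
Qed.

(* Every spanned row and every spanned column carries
   two tokens, which only the edges spanning it can meet; chosen points of free rows and
   free columns carry point tokens (possibly in two copies).  An edge spanning a row or
   a column meets no point token, so every edge meets at most two tokens as soon as the
   chosen points are in "general position" with respect to single edges. *)
Inductive token : Type :=
| row_tok (copy : bool) (j : nat)
| col_tok (copy : bool) (i : nat)
| point_tok (copy : bool) (i j : nat).

Definition incident (n m : nat) (t : token) (e : edge) : Prop :=
  match t with
  | row_tok _ j => spans_row n e j
  | col_tok _ i => spans_col m e i
  | point_tok _ i j => on_segment (grid_pt i j) e
  end.

Definition doubled {A} (f : bool -> A -> token) (l : list A) : list token :=
  flat_map (fun u => [f false u; f true u]) l.

Lemma in_doubled {A} (f : bool -> A -> token) l t :
  In t (doubled f l) <-> exists c u, In u l /\ t = f c u.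
Proof.
  unfold doubled. rewrite in_flat_map. split.
  - intros [u [Hu [<-|[<-|[]]]]]; eauto.
  - intros [[|] [u [Hu ->]]]; exists u; simpl; auto.
Qed.

Lemma doubled_length {A} (f : bool -> A -> token) l : length (doubled f l) = (2 * length l)%nat.
Proof. unfold doubled. induction l; simpl; auto. rewrite IHl. lia. Qed.

Lemma doubled_nodup {A} (f : bool -> A -> token) (l : list A) : NoDup l ->
  (forall c c' u u', f c u = f c' u' -> c = c' /\ u = u') -> NoDup (doubled f l).
Proof.
  intros ND Hf. induction ND as [|a l Na ND IH]; [constructor|].
  change (NoDup ([f false a; f true a] ++ doubled f l)). apply NoDup_app; auto.
  - constructor; [intros [H|[]]; apply Hf in H; destruct H; discriminate|].
    constructor; [intros []|constructor].
  - intros t Ht Hin. apply in_doubled in Hin. destruct Hin as [c [u [Hu ->]]].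
    destruct Ht as [H|[H|[]]]; apply Hf in H; destruct H; subst; contradiction.
Qed.

Definition tokens (n m : nat) (E : list edge) (P : list token) : list token :=
  doubled row_tok (spanned_rows n m E) ++ doubled col_tok (spanned_cols n m E) ++ P.

Lemma tokens_length n m E P : length (tokens n m E P) =
  (2 * length (spanned_rows n m E) + 2 * length (spanned_cols n m E) + length P)%nat.
Proof. unfold tokens. rewrite !length_app, !doubled_length. lia. Qed.

Lemma in_tokens n m E P t : In t (tokens n m E P) <->
  (exists c j, In j (spanned_rows n m E) /\ t = row_tok c j) \/
  (exists c i, In i (spanned_cols n m E) /\ t = col_tok c i) \/ In t P.
Proof. unfold tokens. rewrite !in_app_iff, !in_doubled. tauto. Qed.

Definition free_point_tokens (n m : nat) (E : list edge) (P : list token) : Prop :=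
  forall t, In t P -> exists c i j, t = point_tok c i j /\
     In i (free_cols n m E) /\ In j (free_rows n m E).

Lemma point_token_not_spanning n m E P e c i j :
  free_point_tokens n m E P -> In (point_tok c i j) P -> In e E ->
  on_segment (grid_pt i j) e -> (forall j', ~ spans_row n e j') /\ (forall i', ~ spans_col m e i').
Proof.
  intros HP Ht Ie O. destruct (HP _ Ht) as [c' [i' [j' [Heq [Hi Hj]]]]].
  injection Heq as <- <- <-.
  split; intros k Hk.
  - rewrite (spans_row_cover _ _ _ _ _ Hk O) in Hj.
    apply in_free_rows in Hj. apply (proj2 Hj). exists e; auto.
  - rewrite (spans_col_cover _ _ _ _ _ Hk O) in Hi.
    apply in_free_cols in Hi. apply (proj2 Hi). exists e; auto.
Qed.

Lemma at_most_incident_incl {T X} (L : list T) (R : T -> X -> Prop) e (l : list T) :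
  (forall x, In x L -> R x e -> In x l) -> at_most_incident L R e (length l).
Proof.
  intros H S NDS HS. apply NoDup_incl_length; auto.
  intros x Hx. destruct (HS x Hx). auto.
Qed.

Lemma tokens_nodup n m E (P : list token) : NoDup P -> free_point_tokens n m E P ->
  NoDup (tokens n m E P).
Proof.
  intros NDP HP.
  assert (Hpt : forall t, In t P -> exists c i j, t = point_tok c i j) by
    (intros t Ht; destruct (HP t Ht) as (c & i & j & -> & _); eauto).
  unfold tokens. apply NoDup_app; [|apply NoDup_app|].
  - apply doubled_nodup; [apply NoDup_filter, seq_NoDup|]. intros ? ? ? ? H; injection H; auto.
  - apply doubled_nodup; [apply NoDup_filter, seq_NoDup|]. intros ? ? ? ? H; injection H; auto.
  - exact NDP.
  - intros t H1 H2. apply in_doubled in H1. destruct H1 as (c & i & _ & ->).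
    destruct (Hpt _ H2) as (? & ? & ? & H). discriminate.
  - intros t H1 H2. apply in_doubled in H1. destruct H1 as (c & j & _ & ->).
    apply in_app_iff in H2. destruct H2 as [H2|H2].
    + apply in_doubled in H2. destruct H2 as (? & ? & _ & H). discriminate.
    + destruct (Hpt _ H2) as (? & ? & ? & H). discriminate.
Qed.

Lemma tokens_covered n m E (P : list token) : covers_grid E n m -> free_point_tokens n m E P ->
  covered_by (tokens n m E P) E (incident n m).
Proof.
  intros Hcov HP t Ht. apply in_tokens in Ht.
  destruct Ht as [(c & j & Hj & ->)|[(c & i & Hi & ->)|Ht]].
  - apply in_spanned_rows in Hj. destruct Hj as [_ [e [Ie He]]]. eauto.
  - apply in_spanned_cols in Hi. destruct Hi as [_ [e [Ie He]]]. eauto.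
  - destruct (HP t Ht) as (c & i & j & -> & Hi & Hj).
    apply in_free_cols in Hi. apply in_free_rows in Hj.
    destruct (Hcov i j ltac:(lia) ltac:(lia)) as [e [Ie Oe]]. eauto.
Qed.

Lemma row_edge_tokens n m E (P : list token) e j : free_point_tokens n m E P -> In e E ->
  spans_row n e j -> at_most_incident (tokens n m E P) (incident n m) e 2.
Proof.
  intros HP Ie Hj.
  apply (at_most_incident_incl _ _ e [row_tok false j; row_tok true j]).
  intros t Ht Hr. apply in_tokens in Ht.
  destruct Ht as [(c & j' & _ & ->)|[(c & i & _ & ->)|Ht]]; simpl in Hr.
  - rewrite (spans_row_unique _ _ _ _ Hr Hj). destruct c; simpl; auto.
  - destruct (spans_row_not_col _ _ _ _ _ Hj Hr).
  - destruct (HP t Ht) as (c & i & j' & -> & _).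
    destruct (point_token_not_spanning n m E P e c i j' HP Ht Ie Hr) as [A _].
    destruct (A j Hj).
Qed.

Lemma col_edge_tokens n m E (P : list token) e i : free_point_tokens n m E P -> In e E ->
  spans_col m e i -> at_most_incident (tokens n m E P) (incident n m) e 2.
Proof.
  intros HP Ie Hi.
  apply (at_most_incident_incl _ _ e [col_tok false i; col_tok true i]).
  intros t Ht Hr. apply in_tokens in Ht.
  destruct Ht as [(c & j' & _ & ->)|[(c & i' & _ & ->)|Ht]]; simpl in Hr.
  - destruct (spans_row_not_col _ _ _ _ _ Hr Hi).
  - rewrite (spans_col_unique _ _ _ _ Hr Hi). destruct c; simpl; auto.
  - destruct (HP t Ht) as (c & i' & j' & -> & _).
    destruct (point_token_not_spanning n m E P e c i' j' HP Ht Ie Hr) as [_ B].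
    destruct (B i Hi).
Qed.

Lemma token_count_setup n m E (P : list token) :
  covers_grid E n m -> NoDup P -> free_point_tokens n m E P ->
  (forall e, In e E -> (forall j, ~ spans_row n e j) -> (forall i, ~ spans_col m e i) ->
     at_most_incident P (incident n m) e 2) ->
  NoDup (tokens n m E P) /\ covered_by (tokens n m E P) E (incident n m) /\
  (forall e, In e E -> at_most_incident (tokens n m E P) (incident n m) e 2).
Proof.
  intros Hcov NDP HP Hgen.
  split; [apply tokens_nodup; auto|]. split; [apply tokens_covered; auto|].
  intros e Ie.
  destruct (classic (exists j, spans_row n e j)) as [[j Hj]|NH].
  { apply (row_edge_tokens n m E P e j); auto. }
  destruct (classic (exists i, spans_col m e i)) as [[i Hi]|NV].
  { apply (col_edge_tokens n m E P e i); auto. }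
  (* otherwise e meets only point tokens *)
  intros S NDS HS.
  apply (Hgen e Ie (fun j H => NH (ex_intro _ j H)) (fun i H => NV (ex_intro _ i H)) S NDS).
  intros t Ht. destruct (HS t Ht) as [Hin Hr]. split; auto.
  apply in_tokens in Hin.
  destruct Hin as [(c & j & _ & ->)|[(c & i & _ & ->)|Hin]]; auto;
    exfalso; simpl in Hr; eauto.
Qed.

(* If a single column x0 is free, count two tokens at each free point of that column:
   an edge through two of them would span column x0.  This gives 2(n+m-1) tokens. *)
Lemma one_free_col n m E x0 : covers_grid E n m -> free_cols n m E = [x0] ->
  (n + m - 1 <= length E)%nat.
Proof.
  intros Hcov HC.
  set (P := doubled (fun c y => point_tok c x0 y) (free_rows n m E)).
  assert (HX : In x0 (free_cols n m E)) by (rewrite HC; left; auto).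
  assert (HP : free_point_tokens n m E P).
  { intros t Ht. apply in_doubled in Ht. destruct Ht as (c & y & Hy & ->). eauto 7. }
  destruct (token_count_setup n m E P Hcov) as (ND & Hc & Hf); auto.
  - apply doubled_nodup; [apply free_rows_nodup|]. intros ? ? ? ? H; injection H; auto.
  - intros e Ie NH NV [|t S] NDS HS; simpl; [lia|].
    destruct (HS t (or_introl eq_refl)) as [Ht Hr].
    apply in_doubled in Ht. destruct Ht as (c & y & Hy & ->).
    (* all tokens met by e sit at the same point (x0,y) *)
    apply (NoDup_incl_length (l' := [point_tok false x0 y; point_tok true x0 y]) NDS).
    intros t' Ht'. destruct (HS t' Ht') as [Ht'' Hr'].
    apply in_doubled in Ht''. destruct Ht'' as (c' & y' & Hy' & ->).
    destruct (Nat.eq_dec y y') as [<-|Ny].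
    + destruct c'; simpl; auto.
    + exfalso. apply (NV x0). apply in_free_rows in Hy. apply in_free_rows in Hy'.
      exists y, y'. repeat split; auto; lia.
  - pose proof (incidence_count_two _ E _ ND Hc Hf) as Hcnt.
    rewrite tokens_length in Hcnt. unfold P in Hcnt. rewrite doubled_length in Hcnt.
    pose proof (rows_split n m E). pose proof (cols_split n m E). rewrite HC in *. simpl in *.
    lia.
Qed.

Lemma one_free_row n m E y0 : covers_grid E n m -> free_rows n m E = [y0] ->
  (n + m - 1 <= length E)%nat.
Proof.
  intros Hcov HR.
  set (P := doubled (fun c x => point_tok c x y0) (free_cols n m E)).
  assert (HY : In y0 (free_rows n m E)) by (rewrite HR; left; auto).
  assert (HP : free_point_tokens n m E P).
  { intros t Ht. apply in_doubled in Ht. destruct Ht as (c & x & Hx & ->). eauto 7. }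
  destruct (token_count_setup n m E P Hcov) as (ND & Hc & Hf); auto.
  - apply doubled_nodup; [apply free_cols_nodup|]. intros ? ? ? ? H; injection H; auto.
  - intros e Ie NH NV [|t S] NDS HS; simpl; [lia|].
    destruct (HS t (or_introl eq_refl)) as [Ht Hr].
    apply in_doubled in Ht. destruct Ht as (c & x & Hx & ->).
    (* all tokens met by e sit at the same point (x,y0) *)
    apply (NoDup_incl_length (l' := [point_tok false x y0; point_tok true x y0]) NDS).
    intros t' Ht'. destruct (HS t' Ht') as [Ht'' Hr'].
    apply in_doubled in Ht''. destruct Ht'' as (c' & x' & Hx' & ->).
    destruct (Nat.eq_dec x x') as [<-|Nx].
    + destruct c'; simpl; auto.
    + exfalso. apply (NH y0). apply in_free_cols in Hx. apply in_free_cols in Hx'.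
      exists x, x'. repeat split; auto; lia.
  - pose proof (incidence_count_two _ E _ ND Hc Hf) as Hcnt.
    rewrite tokens_length in Hcnt. unfold P in Hcnt. rewrite doubled_length in Hcnt.
    pose proof (rows_split n m E). pose proof (cols_split n m E). rewrite HR in *. simpl in *.
    lia.
Qed.

Lemma list_min_exists (l : list nat) : l <> [] ->
  exists x, In x l /\ forall y, In y l -> (x <= y)%nat.
Proof.
  induction l as [|a l IH]; intros Hn; [congruence|].
  destruct l as [|b l].
  - exists a. split; [left; auto|]. intros y [<-|[]]; lia.
  - destruct IH as [x [Hx Hm]]; [discriminate|].
    destruct (le_lt_dec a x).
    + exists a. split; [left; auto|]. intros y [<-|Hy]; [lia|]. specialize (Hm y Hy). lia.
    + exists x. split; [right; auto|]. intros y [<-|Hy]; [lia|]. auto.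
Qed.

Lemma list_max_exists (l : list nat) : l <> [] ->
  exists x, In x l /\ forall y, In y l -> (y <= x)%nat.
Proof.
  induction l as [|a l IH]; intros Hn; [congruence|].
  destruct l as [|b l].
  - exists a. split; [left; auto|]. intros y [<-|[]]; lia.
  - destruct IH as [x [Hx Hm]]; [discriminate|].
    destruct (le_lt_dec x a).
    + exists a. split; [left; auto|]. intros y [<-|Hy]; [lia|]. specialize (Hm y Hy). lia.
    + exists x. split; [right; auto|]. intros y [<-|Hy]; [lia|]. auto.
Qed.

Lemma min_max_inner (l : list nat) : NoDup l -> (2 <= length l)%nat ->
  exists lo hi inner, In lo l /\ In hi l /\ (lo < hi)%nat /\
   (forall x, In x l -> lo <= x <= hi)%nat /\ NoDup inner /\
   (forall x, In x inner <-> In x l /\ (lo < x < hi)%nat) /\ (length inner + 2 = length l)%nat.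
Proof.
  intros ND Hl.
  assert (Hne : l <> []) by (intro; subst; simpl in Hl; lia).
  destruct (list_min_exists l Hne) as [lo [Ilo Hlo]].
  destruct (list_max_exists l Hne) as [hi [Ihi Hhi]].
  assert (Hlt : (lo < hi)%nat).
  { destruct (Nat.lt_ge_cases lo hi); auto.
    assert (Hsub : incl l [lo]).
    { intros x Hx. specialize (Hlo x Hx). specialize (Hhi x Hx). left. lia. }
    pose proof (NoDup_incl_length ND Hsub). simpl in *. lia. }
  set (f := fun x => andb (Nat.ltb lo x) (Nat.ltb x hi)).
  assert (Hf : forall x, f x = true <-> (lo < x < hi)%nat)
    by (intros x; unfold f; rewrite Bool.andb_true_iff, !Nat.ltb_lt; tauto).
  exists lo, hi, (filter f l).
  split; [auto|]. split; [auto|]. split; [auto|].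
  split; [intros x Hx; split; auto|]. split; [apply NoDup_filter; auto|].
  split.
  - intros x. rewrite filter_In, Hf. tauto.
  - (* the complement of the inner part is exactly [lo; hi] *)
    rewrite (length_filter_split f l).
    assert (Houter : forall x, In x (filter (fun x => negb (f x)) l) <-> x = lo \/ x = hi).
    { intros x. rewrite filter_In, Bool.negb_true_iff.
      split.
      - intros [Hx Hfx]. assert (~ (lo < x < hi)%nat) by (rewrite <- Hf; congruence).
        specialize (Hlo x Hx). specialize (Hhi x Hx). lia.
      - assert (Hfalse : forall y, ~ (lo < y < hi)%nat -> f y = false)
          by (intros y Hy; destruct (f y) eqn:Fy; auto; apply Hf in Fy; tauto).
        intros [-> | ->]; split; auto; apply Hfalse; lia. }
    assert (length (filter (fun x => negb (f x)) l) = 2%nat); [|lia].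
    apply Nat.le_antisymm.
    + apply (NoDup_incl_length (l' := [lo; hi]) (NoDup_filter _ ND)).
      intros x Hx. apply Houter in Hx. destruct Hx as [-> | ->]; simpl; auto.
    + apply (NoDup_incl_length (l := [lo; hi])).
      * constructor; [intros [H|[]]; lia|constructor; [intros []|constructor]].
      * intros x Hx. apply Houter. destruct Hx as [<- | [<- | []]]; auto.
Qed.

(* The frame of the free subgrid: free points on the extreme free columns lo and hi, and
   on the extreme free rows ylo and yhi (inner free columns only, so that corners are
   not listed twice). *)
Definition frame (lo hi ylo yhi : nat) (rows inner : list nat) : list (nat * nat) :=
  map (fun y => (lo, y)) rows ++ map (fun y => (hi, y)) rows ++
  map (fun x => (x, ylo)) inner ++ map (fun x => (x, yhi)) inner.

Lemma in_frame lo hi ylo yhi rows inner p : In p (frame lo hi ylo yhi rows inner) <->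
  (In (snd p) rows /\ (fst p = lo \/ fst p = hi)) \/
  (In (fst p) inner /\ (snd p = ylo \/ snd p = yhi)).
Proof.
  unfold frame. rewrite !in_app_iff, !in_map_iff. destruct p as [x y]; simpl. split.
  - intros [[y' [E1 H]]|[[y' [E1 H]]|[[x' [E1 H]]|[x' [E1 H]]]]];
      injection E1 as <- <-; tauto.
  - intros [[H [-> | ->]]|[H [-> | ->]]]; eauto 10.
Qed.

Lemma frame_length lo hi ylo yhi rows inner :
  length (frame lo hi ylo yhi rows inner) = (2 * length rows + 2 * length inner)%nat.
Proof. unfold frame. rewrite !length_app, !length_map. lia. Qed.

Lemma frame_nodup lo hi ylo yhi rows inner : NoDup rows -> NoDup inner ->
  (lo < hi)%nat -> (ylo < yhi)%nat -> (forall x, In x inner -> lo < x < hi)%nat ->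
  NoDup (frame lo hi ylo yhi rows inner).
Proof.
  intros NDr NDi Hx Hy Hin.
  assert (Hmap : forall (f : nat -> nat * nat) l, NoDup l -> (forall a b, f a = f b -> a = b) ->
                 NoDup (map f l)) by (intros; apply Injective_map_NoDup; auto).
  unfold frame. repeat apply NoDup_app;
    try (apply Hmap; auto; intros a b H; injection H; auto; fail);
    intros p H1 H2; rewrite ?in_app_iff in H2; rewrite ?in_map_iff in H1; rewrite ?in_map_iff in H2;
    repeat match goal with
    | H : exists _, _ |- _ => destruct H as [? [? ?]]
    | H : _ \/ _ |- _ => destruct H
    | H : (_, _) = p |- _ => subst p
    end;
    repeat match goal with H : (_, _) = (_, _) |- _ => injection H as ? ?; subst end;
    repeat match goal with H : In _ inner |- _ => apply Hin in H end; lia.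
Qed.

(* Two distinct free grid points on one edge differ in both coordinates: otherwise the
   edge would span their common row or column. *)
Lemma free_points_diagonal n m E e i j i' j' : In e E ->
  In i (free_cols n m E) -> In j (free_rows n m E) ->
  In i' (free_cols n m E) -> In j' (free_rows n m E) -> (i, j) <> (i', j') ->
  on_segment (grid_pt i j) e -> on_segment (grid_pt i' j') e ->
  diagonal (grid_pt i j) (grid_pt i' j').
Proof.
  intros Ie Ci Rj Ci' Rj' Nij O O'. unfold diagonal, grid_pt; simpl.
  apply in_free_cols in Ci, Ci'. apply in_free_rows in Rj, Rj'.
  split; intro Heq; apply INR_eq in Heq; subst.
  - apply (proj2 Ci'). exists e. split; auto. exists j, j'.
    repeat split; try lia; auto; intro; subst; auto.
  - apply (proj2 Rj'). exists e. split; auto. exists i, i'.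
    repeat split; try lia; auto; intro; subst; auto.
Qed.

Definition frame_token (p : nat * nat) : token := point_tok false (fst p) (snd p).
Definition frame_point (p : nat * nat) : point := grid_pt (fst p) (snd p).

Lemma frame_point_inj p q : frame_point p = frame_point q -> p = q.
Proof.
  destruct p, q. unfold frame_point. simpl. intros H. apply grid_pt_inj in H.
  destruct H; subst; auto.
Qed.

Section FreeBoundary.

Variables (n m : nat) (E : list edge) (F : list (nat * nat)) (x0 x1 y0 y1 : R).
Hypothesis F_free : forall p, In p F ->
  In (fst p) (free_cols n m E) /\ In (snd p) (free_rows n m E).
Hypothesis F_bd : forall p, In p F -> on_boundary x0 x1 y0 y1 (frame_point p).

Lemma free_boundary_diagonal e p q : In e E -> In p F -> In q F -> p <> q ->
  on_segment (frame_point p) e -> on_segment (frame_point q) e ->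
  diagonal (frame_point p) (frame_point q).
Proof.
  intros Ie Hp Hq Npq Op Oq. destruct p as [i j], q as [i' j'].
  destruct (F_free _ Hp), (F_free _ Hq).
  apply (free_points_diagonal n m E e); auto.
Qed.

(* An edge passes through at most two points of F: three would be collinear boundary
   points on a diagonal. *)
Lemma free_boundary_at_most_two e : In e E ->
  at_most_incident (map frame_token F) (incident n m) e 2.
Proof.
  intros Ie [|t1 [|t2 [|t3 S]]] NDS HS; simpl; try lia. exfalso.
  inversion NDS as [|? ? N1 NDS1]; subst. inversion NDS1 as [|? ? N2 _]; subst.
  destruct (HS t1 ltac:(simpl; auto)) as [I1 R1].
  destruct (HS t2 ltac:(simpl; auto)) as [I2 R2].
  destruct (HS t3 ltac:(simpl; auto)) as [I3 R3].
  apply in_map_iff in I1, I2, I3.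
  destruct I1 as [p1 [<- Hp1]], I2 as [p2 [<- Hp2]], I3 as [p3 [<- Hp3]].
  simpl in R1, R2, R3. fold (frame_point p1) (frame_point p2) (frame_point p3) in *.
  assert (Hne : forall p q, p <> q -> frame_point p <> frame_point q)
    by (intros p q Npq Hpq; apply Npq, frame_point_inj; auto).
  assert (N12 : p1 <> p2) by (intro; subst; apply N1; simpl; auto).
  assert (N13 : p1 <> p3) by (intro; subst; apply N1; simpl; auto).
  assert (N23 : p2 <> p3) by (intro; subst; apply N2; simpl; auto).
  apply (segment_three_boundary_points x0 x1 y0 y1 _ _ _ e (F_bd p1 Hp1) (F_bd p2 Hp2)
           (F_bd p3 Hp3) (Hne _ _ N12) (Hne _ _ (not_eq_sym N13)) (Hne _ _ (not_eq_sym N23))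
           R1 R2 R3).
  apply (free_boundary_diagonal e); auto.
Qed.

Lemma incident_frame_token t e p : In t (tokens n m E (map frame_token F)) ->
  incident n m t e -> In p F -> on_segment (frame_point p) e -> In e E ->
  In t (map frame_token F).
Proof.
  intros Ht Hr Hp O Ie.
  assert (Hpt : In (frame_token p) (map frame_token F)) by (apply in_map; auto).
  assert (HP : free_point_tokens n m E (map frame_token F)).
  { intros t' Ht'. apply in_map_iff in Ht'. destruct Ht' as [q [<- Hq]].
    exists false, (fst q), (snd q). split; auto. }
  destruct (point_token_not_spanning n m E _ e false (fst p) (snd p) HP Hpt Ie O) as [NH NV].
  apply in_tokens in Ht. destruct Ht as [(c & j & _ & ->)|[(c & i & _ & ->)|Ht]]; auto;
    simpl in Hr; [destruct (NH j Hr) | destruct (NV i Hr)].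
Qed.

Local Notation frame_tokens := (tokens n m E (map frame_token F)).

Lemma tight_frame_matching : covers_grid E n m ->
  (forall e, In e E -> exists k1 k2, In k1 frame_tokens /\ In k2 frame_tokens /\ k1 <> k2 /\
                         incident n m k1 e /\ incident n m k2 e) ->
  (forall k e e', In k frame_tokens -> In e E -> In e' E ->
                  incident n m k e -> incident n m k e' -> e = e') ->
  In (x0,y0) (map frame_point F) /\ In (x0,y1) (map frame_point F) /\
  In (x1,y0) (map frame_point F) /\ In (x1,y1) (map frame_point F) ->
  boundary_matching x0 x1 y0 y1 E (map frame_point F).
Proof.
  intros Hcov Tpair Tuniq Hcorners.
  assert (B_in : forall z, In z (map frame_point F) -> exists p, In p F /\ z = frame_point p)
    by (intros z Hz; apply in_map_iff in Hz; destruct Hz as [p [<- Hp]]; eauto).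
  split; auto.
  - intros z Hz. destruct (B_in z Hz) as [p [Hp ->]]. auto.
  - (* the edge through a frame point meets a second token, which is a frame token *)
    intros z Hz. destruct (B_in z Hz) as [p [Hp ->]].
    destruct (F_free p Hp) as [Hx Hy].
    apply in_free_cols in Hx. apply in_free_rows in Hy.
    destruct (Hcov (fst p) (snd p) ltac:(lia) ltac:(lia)) as [e [Ie Oe]].
    destruct (Tpair e Ie) as (k1 & k2 & Ik1 & Ik2 & Nk & Rk1 & Rk2).
    apply (incident_frame_token _ e p) in Ik1, Ik2; auto.
    apply in_map_iff in Ik1, Ik2.
    destruct Ik1 as [q1 [<- Hq1]], Ik2 as [q2 [<- Hq2]].
    destruct (classic (q1 = p)) as [->|N1].
    + exists (frame_point q2), e. repeat split; auto; [apply in_map; auto|].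
      intro Heq. apply frame_point_inj in Heq. subst. auto.
    + exists (frame_point q1), e. repeat split; auto; [apply in_map; auto|].
      intro Heq. apply frame_point_inj in Heq. auto.
  - intros e z1 z2 Ie Hz1 Hz2 Nz O1 O2.
    destruct (B_in z1 Hz1) as [p1 [Hp1 ->]], (B_in z2 Hz2) as [p2 [Hp2 ->]].
    apply (free_boundary_diagonal e); auto. intro; subst; auto.
  - intros z e e' Hz Ie Ie' O1 O2. destruct (B_in z Hz) as [p [Hp ->]].
    apply (Tuniq (frame_token p)); auto.
    unfold tokens. rewrite !in_app_iff. right; right. apply in_map; auto.
Qed.

End FreeBoundary.

Definition grid_boundary_matching (n m : nat) (E : list edge) : Prop :=
  exists x0 x1 y0 y1 B, x0 < x1 /\ y0 < y1 /\ boundary_matching x0 x1 y0 y1 E B /\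
    (forall z, In z B -> exists i j, z = grid_pt i j /\ (1 <= i <= n)%nat /\ (1 <= j <= m)%nat).

(* The frame of the free subgrid has
   2(#free rows) + 2(#free columns) - 4 points; with the row and column tokens this is
   2(n+m) - 4 tokens, hence n+m-2 edges.  In the equality case the frame is matched by
   the edges: a boundary matching of the rectangle spanned by the extreme free rows and
   columns. *)
Lemma free_subgrid_case n m E : covers_grid E n m -> NoDup E ->
  (2 <= length (free_cols n m E))%nat -> (2 <= length (free_rows n m E))%nat ->
  (n + m - 2 <= length E)%nat /\
  ((length E <= n + m - 2)%nat -> grid_boundary_matching n m E).
Proof.
  intros Hcov NDE Hcols Hrows.
  destruct (min_max_inner (free_cols n m E) (free_cols_nodup n m E) Hcols)
    as (lo & hi & inner & Ilo & Ihi & Hlh & Hrange & NDin & Hin & Hlen).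
  destruct (min_max_inner (free_rows n m E) (free_rows_nodup n m E) Hrows)
    as (ylo & yhi & _ & Iylo & Iyhi & Hylh & Hyrange & _).
  set (F := frame lo hi ylo yhi (free_rows n m E) inner).
  assert (F_free : forall p, In p F -> In (fst p) (free_cols n m E) /\ In (snd p) (free_rows n m E))
    by (intros p Hp; apply in_frame in Hp;
        destruct Hp as [[Hy [-> | ->]]|[Hx [-> | ->]]]; auto; apply Hin in Hx; tauto).
  assert (F_bd : forall p, In p F ->
             on_boundary (INR lo) (INR hi) (INR ylo) (INR yhi) (frame_point p)).
  { intros p Hp. destruct (F_free p Hp) as [Hx Hy].
    destruct (Hrange _ Hx), (Hyrange _ Hy).
    split; [split; split; simpl; apply le_INR; auto|].
    apply in_frame in Hp. simpl. destruct Hp as [[_ [-> | ->]]|[_ [-> | ->]]]; auto. }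
  set (P := map frame_token F).
  destruct (token_count_setup n m E P Hcov) as (ND & Hc & Hf).
  - apply Injective_map_NoDup.
    + intros [a b] [c d] H. injection H as <- <-. auto.
    + apply frame_nodup; auto using free_rows_nodup. intros x Hx. apply Hin in Hx. tauto.
  - intros t Ht. apply in_map_iff in Ht. destruct Ht as [p [<- Hp]].
    exists false, (fst p), (snd p). split; auto.
  - intros e Ie _ _. apply (free_boundary_at_most_two n m E F _ _ _ _ F_free F_bd e Ie).
  - assert (Hcount : length (tokens n m E P) = (2 * (n + m) - 4)%nat).
    { rewrite tokens_length. unfold P. rewrite length_map. unfold F. rewrite frame_length.
      pose proof (rows_split n m E). pose proof (cols_split n m E). lia. }
    pose proof (incidence_count_two _ E _ ND Hc Hf) as Hcnt.
    split; [lia|]. intros Hk.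
    destruct (incidence_count_tight _ E _ ND NDE Hc Hf) as [Tpair Tuniq]; [lia|].
    exists (INR lo), (INR hi), (INR ylo), (INR yhi), (map frame_point F).
    split; [apply lt_INR; auto|]. split; [apply lt_INR; auto|]. split.
    + apply (tight_frame_matching n m E F _ _ _ _ F_free F_bd Hcov Tpair Tuniq).
      repeat split; apply (in_map frame_point F (_, _)), in_frame; simpl; auto.
    + intros z Hz. apply in_map_iff in Hz. destruct Hz as [p [<- Hp]].
      destruct (F_free p Hp) as [Hx Hy]. apply in_free_cols in Hx. apply in_free_rows in Hy.
      exists (fst p), (snd p). split; auto. split; lia.
Qed.

Lemma two_edges_share_vertex V E e1 e2 : geometric_tree V E -> In e1 E -> In e2 E ->
  e1 <> e2 -> (forall e, In e E -> e = e1 \/ e = e2) ->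
  exists w, is_endpoint w e1 /\ is_endpoint w e2.
Proof.
  intros (_ & _ & HE & _ & _ & Hconn & _) I1 I2 N12 Hall.
  apply NNPP. intro Hno.
  (* otherwise the endpoints of e1 would form a connected component *)
  assert (Hst : forall u v, clos_refl_trans point (adj E) u v -> is_endpoint u e1 ->
             is_endpoint v e1).
  { intros u v H. apply clos_rt_rt1n in H. induction H as [x|x y z Hxy Hyz IH]; auto.
    intros Hx. apply IH. destruct Hxy as [Hxy|Hxy]; destruct (Hall _ Hxy) as [Ee|Ee].
    - rewrite <- Ee. right; auto.
    - exfalso. apply Hno. exists x. split; auto. rewrite <- Ee. left; auto.
    - rewrite <- Ee. left; auto.
    - exfalso. apply Hno. exists x. split; auto. rewrite <- Ee. right; auto. }
  assert (is_endpoint (fst e2) e1).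
  { apply (Hst (fst e1)); [|left; auto]. apply Hconn; apply HE; auto. }
  apply Hno. exists (fst e2). split; auto. left; auto.
Qed.

Lemma two_edges_exhaust (E : list edge) e1 e2 : NoDup E -> (length E <= 2)%nat ->
  In e1 E -> In e2 E -> e1 <> e2 -> forall e, In e E -> e = e1 \/ e = e2.
Proof.
  intros NDE Hk I1 I2 N12 e Ie. apply NNPP. intro Hn.
  assert (ND3 : NoDup [e1; e2; e]).
  { constructor; [intros [H|[H|[]]]; subst; tauto|].
    constructor; [intros [H|[]]; subst; tauto|]. constructor; [intros []|constructor]. }
  assert (Hsub : incl [e1; e2; e] E) by (intros x [<-|[<-|[<-|[]]]]; auto).
  pose proof (NoDup_incl_length ND3 Hsub). simpl in *. lia.
Qed.

Lemma INR_1_2 x : (1 <= x <= 2)%nat -> INR x = 1 \/ INR x = 2.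
Proof. intros. destruct x as [|[|[|x]]]; try lia; simpl; [left|right]; lra. Qed.

Lemma unit_square_opposite E B c : boundary_matching 1 2 1 2 E B ->
  (forall z, In z B -> (fst z = 1 \/ fst z = 2) /\ (snd z = 1 \/ snd z = 2)) -> In c B ->
  exists e, In e E /\ on_segment c e /\ on_segment (3 - fst c, 3 - snd c) e.
Proof.
  intros HM Hc Ic.
  destruct (bm_partner _ _ _ _ _ _ HM c Ic) as [t [e [It [Ie [Nt [Oc Ot]]]]]].
  destruct (bm_diagonal _ _ _ _ _ _ HM e _ _ Ie Ic It (not_eq_sym Nt) Oc Ot) as [D1 D2].
  destruct (Hc _ Ic), (Hc _ It).
  exists e. repeat split; auto.
  replace (3 - fst c, 3 - snd c) with t; auto. apply point_eq; simpl; lra.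
Qed.

(* For the 2x2 grid a tree with at most two edges induces no boundary matching: its two
   edges would contain the two diagonals of the unit square, and their common endpoint
   would be collinear with, and on the same side of, both (1,1),(2,2) and (1,2),(2,1). *)
Lemma no_boundary_matching_two_edges V E : geometric_tree V E ->
  (length E <= 2)%nat -> grid_boundary_matching 2 2 E -> False.
Proof.
  intros Ht Hk (x0 & x1 & y0 & y1 & B & Hx & Hy & HM & Hgrid).
  pose proof Ht as (_ & _ & _ & NDE & _).
  destruct (bm_corners _ _ _ _ _ _ HM) as (C00 & C01 & C10 & C11).
  assert (Hc : forall z, In z B -> (fst z = 1 \/ fst z = 2) /\ (snd z = 1 \/ snd z = 2)).
  { intros z Hz. destruct (Hgrid z Hz) as [x [y [-> [Ix Iy]]]]. simpl.
    split; apply INR_1_2; auto. }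
  assert (x0 = 1 /\ x1 = 2) as [-> ->]
    by (destruct (Hc _ C00) as [A _]; destruct (Hc _ C10) as [A' _]; simpl in *; lra).
  assert (y0 = 1 /\ y1 = 2) as [-> ->]
    by (destruct (Hc _ C00) as [_ A]; destruct (Hc _ C01) as [_ A']; simpl in *; lra).
  destruct (unit_square_opposite E B _ HM Hc C00) as [e1 [Ie1 [O1 O1']]].
  destruct (unit_square_opposite E B _ HM Hc C01) as [e2 [Ie2 [O2 O2']]].
  assert (N12 : e1 <> e2).
  { intro; subst e2. assert (Hn : ((1,1) : point) <> (1,2)) by (intro H; inversion H; lra).
    destruct (bm_diagonal _ _ _ _ _ _ HM e1 _ _ Ie1 C00 C01 Hn O1 O2). simpl in *. lra. }
  destruct (two_edges_share_vertex V E e1 e2 Ht Ie1 Ie2 N12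
              (two_edges_exhaust E e1 e2 NDE Hk Ie1 Ie2 N12)) as [w [W1 W2]].
  destruct (endpoint_same_ray w e1 _ _ W1 O1 O1') as [P1 Q1].
  destruct (endpoint_same_ray w e2 _ _ W2 O2 O2') as [P2 Q2].
  unfold cross in *. destruct w as [wx wy]. simpl in *. nra.
Qed.

Lemma edge_bound_cases n m V E : (1 <= n)%nat -> (1 <= m)%nat -> geometric_tree V E ->
  covers_grid E n m ->
  (2 * n - 1 <= length E)%nat \/ (2 * m - 1 <= length E)%nat \/
  (n + m - 1 <= length E)%nat \/
  ((2 <= n)%nat /\ (2 <= m)%nat /\ (n + m - 2 <= length E)%nat /\
   ((length E <= n + m - 2)%nat -> grid_boundary_matching n m E)).
Proof.
  intros Hn Hm Ht Hcov.
  pose proof (cols_split n m E). pose proof (rows_split n m E).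
  destruct (free_cols n m E) as [|x0 [|x1 l]] eqn:HC.
  - left. apply (all_cols_spanned n m V E); auto.
  - right; right; left. apply (one_free_col n m E x0); auto.
  - destruct (free_rows n m E) as [|y0 [|y1 l']] eqn:HR.
    + right; left. apply (all_rows_spanned n m V E); auto.
    + right; right; left. apply (one_free_row n m E y0); auto.
    + right; right; right. simpl in *. split; [lia|]. split; [lia|].
      pose proof Ht as (_ & _ & _ & NDE & _).
      apply (free_subgrid_case n m E Hcov NDE); [rewrite HC|rewrite HR]; simpl; lia.
Qed.

Theorem lemma8 (n m : nat) (V : list point) (E : list edge) :
  (1 <= n)%nat -> (1 <= m)%nat ->
  geometric_tree V E -> covers_grid E n m ->
  (2 * Nat.min n m - 2 <= length E)%nat /\
  ((n <= 2)%nat -> (m <= 2)%nat -> (2 * Nat.min n m - 1 <= length E)%nat) /\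
  (n <> m -> (2 * Nat.min n m - 1 <= length E)%nat) /\
  (n = m -> (3 <= n)%nat -> noncrossing E -> (2 * n - 1 <= length E)%nat).
Proof.
  intros Hn Hm Ht Hcov.
  pose proof Ht as (_ & _ & HE & _).
  destruct (edge_bound_cases n m V E Hn Hm Ht Hcov)
    as [H|[H|[H|(Hn2 & Hm2 & H & Hmatch)]]];
    (* each claim follows arithmetically, except (ii) and (iv) in the last case *)
    (split; [|split; [|split]]); intros; try lia.
  - (* (ii), n = m = 2: a tree with at most two edges would induce a boundary matching *)
    assert (n = 2%nat) by lia. assert (m = 2%nat) by lia. subst.
    destruct (Nat.le_gt_cases 3 (length E)) as [H3|H3]; [lia|exfalso].
    apply (no_boundary_matching_two_edges V E Ht); [lia|]. apply Hmatch. lia.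
  - (* (iv): at most 2n-2 edges would induce a noncrossing boundary matching *)
    destruct (Nat.le_gt_cases (2 * n - 1) (length E)) as [H4|H4]; [lia|exfalso].
    destruct (Hmatch ltac:(lia)) as (x0 & x1 & y0 & y1 & B & _ & _ & HM & _).
    apply (no_noncrossing_boundary_matching x0 x1 y0 y1 E B HM); auto.
    intros e Ie. apply HE; auto.
Qed.
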